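(* Let $T$ be a complete theory with monster model $\mathcal{U}$, $A\subseteq\mathcal{U}$ small, $\mu\in\mathfrak{M}_x(\mathcal{U})$, and $\nu_1,\nu_2\in\mathfrak{M}_y(\mathcal{U})$ with $\operatorname{supp}(\nu_1)\cap\operatorname{supp}(\nu_2)=\emptyset$. Suppose $\mu\blacktriangleright_A\nu_1$ and $\mu\blacktriangleright_A\nu_2$. Then there exists a finite tuple $b$ from $\mathcal{U}$ such that for all $r,s\in[0,1]$ with $r+s=1$, $\mu\blacktriangleright_{Ab}r\nu_1+s\nu_2$.
   Context: For $C\subseteq\mathcal{U}$, $\mathcal{L}_x(C)$ is the Boolean algebra of formulas in $x$ with parameters from $C$ modulo $T$, embedded in $\mathcal{L}_{xy}(C)$ via $\varphi(x)\mapsto\varphi(x)\wedge y=y$; $\mathfrak{M}_x(C)$ is the set of finitely additive probability measures on $\mathcal{L}_x(C)$. For $\omega\in\mathfrak{M}_{xy}(C)$, $\pi_x(\omega)(\varphi(x))=\omega(\varphi(x)\wedge y=y)$ (similarly $\pi_y$); $\omega|_D$ is restriction. The support $\operatorname{supp}(\nu)$ of $\nu\in\mathfrak{M}_y(\mathcal{U})$ is the set of $q\in S_y(\mathcal{U})$ such that $\nu(\psi)>0$ for every $\psi\in q$. $\mathfrak{M}^{\mathrm{Am}}_{xy}(C)$ is the set of $\lambda\in\mathfrak{M}_{xy}(C)$ with $\lambda(\varphi(x)\wedge\psi(y))=\pi_x(\lambda)(\varphi(x))\pi_y(\lambda)(\psi(y))$ for all $\varphi(x)\in\mathcal{L}_x(C),\psi(y)\in\mathcal{L}_y(C)$.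 For $\lambda\in\mathfrak{M}^{\mathrm{Am}}_{xy}(C)$ with $\pi_x(\lambda)=\mu|_C$: $\operatorname{Amal}(\lambda,\mu)=\{\omega\in\mathfrak{M}^{\mathrm{Am}}_{xy}(\mathcal{U}):\omega|_C=\lambda,\pi_x(\omega)=\mu\}$. $\mu\blacktriangleright_C\nu$ means there is $\lambda\in\mathfrak{M}_{xy}(C)$ with $\pi_x(\lambda)=\mu|_C$, $\operatorname{Amal}(\lambda,\mu)\neq\emptyset$, and $\pi_y(\omega)=\nu$ for every $\omega\in\operatorname{Amal}(\lambda,\mu)$. $Ab$ denotes $A$ together with the entries of $b$. *)

From Stdlib Require Import Reals List.
From mathcomp Require Import ssreflect ssrfun ssrbool eqtype ssrnat fintype.

Set Implicit Arguments.
Unset Strict Implicit.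
Unset Printing Implicit Defensive.

Record language := Language { rsym : Type ; rar : rsym -> nat }.

Record structure (L : language) := Structure {
  dom :> Type ;
  rinterp : forall r : rsym L, ('I_(rar r) -> dom) -> Prop }.

Inductive formula (L : language) : Type :=
  | F_eq  : nat -> nat -> formula L
  | F_rel : forall r : rsym L, ('I_(rar r) -> nat) -> formula L
  | F_not : formula L -> formula L
  | F_and : formula L -> formula L -> formula L
  | F_ex  : nat -> formula L -> formula L.

Fixpoint sat (L : language) (M : structure L) (e : nat -> M) (phi : formula L)
  : Prop :=
  match phi with
  | F_eq i j => e i = e j
  | F_rel r a => @rinterp L M r (fun k => e (a k))
  | F_not p => ~ sat e p
  | F_and p q => sat e p /\ sat e q
  | F_ex i p => exists u : M, sat (fun j => if j == i then u else e j) p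
  end.

(* subsets of M^n (n-tuples), i.e. "formulas in n variables" read semantically *)
Definition tpred (L : language) (M : structure L) (n : nat) :=
  ('I_n -> M) -> Prop.

Definition definable (L : language) (M : structure L) (C : M -> Prop)
  (n : nat) (D : tpred M n) : Prop :=
  exists (phi : formula L) (k : nat) (p : 'I_k -> M),
    (forall i, C (p i)) /\
    forall (v : 'I_n -> M) (e : nat -> M),
      (forall i : 'I_n, e i = v i) ->
      (forall i : 'I_k, e (n + i) = p i) ->
      (D v <-> sat e phi).

Definition card_le (A B : Type) : Prop := exists f : A -> B, injective f.
Definition card_lt (A B : Type) : Prop := card_le A B /\ ~ card_le B A.

Definition small (L : language) (M : structure L) (K : Type) (C : M -> Prop) :=
  card_lt {u : M | C u} K.

(* kappa-saturation: every family of C-definable sets in one variable (C small)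
   with the finite intersection property (i.e. a partial 1-type over C) is realized *)
Definition saturated (L : language) (M : structure L) (K : Type) : Prop :=
  forall C : M -> Prop, small K C ->
  forall F : tpred M 1 -> Prop,
    (forall D, F D -> definable C D) ->
    (forall l : list (tpred M 1), (forall D, In D l -> F D) ->
        exists v, forall D, In D l -> D v) ->
    exists v, forall D, F D -> D v.

Definition partial_elementary (L : language) (M : structure L)
  (C : M -> Prop) (f : M -> M) : Prop :=
  forall (phi : formula L) (e : nat -> M), (forall i, C (e i)) ->
    (sat e phi <-> sat (fun i => f (e i)) phi).

Definition automorphism (L : language) (M : structure L) (s : M -> M) : Prop :=
  bijective s /\
  forall (r : rsym L) (a : 'I_(rar r) -> M),
    @rinterp L M r a <-> @rinterp L M r (fun k => s (a k)).

Definition strongly_homogeneous (L : language) (M : structure L) (K : Type) :=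
  forall C : M -> Prop, small K C ->
  forall f : M -> M, partial_elementary C f ->
  exists s, automorphism s /\ forall u, C u -> s u = f u.

(* M is a monster model (of its complete theory Th(M)) with saturation degree
   kappa = |K| > |L| + aleph_0 *)
Definition monster (L : language) (M : structure L) (K : Type) : Prop :=
  inhabited M /\ card_lt nat K /\ card_lt (rsym L) K /\
  saturated M K /\ strongly_homogeneous M K.

Definition fullset {L : language} (M : structure L) : M -> Prop := fun _ => True.
Arguments fullset {L} M _.

(* mu in M_n(C): a finitely additive probability measure on the Boolean algebra
   of C-definable subsets of M^n (values on other predicates are irrelevant) *)
Definition keisler (L : language) (M : structure L) (C : M -> Prop) (n : nat)
  (mu : tpred M n -> R) : Prop :=
  (forall D D', definable C D -> (forall v, D v <-> D' v) -> mu D = mu D') /\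
  (forall D, definable C D -> (0 <= mu D)%R) /\
  mu (fun _ => True) = 1%R /\
  (forall D1 D2, definable C D1 -> definable C D2 ->
     (forall v, ~ (D1 v /\ D2 v)) ->
     mu (fun v => D1 v \/ D2 v) = (mu D1 + mu D2)%R).

(* equality of measures as elements of M_n(C) (also gives restriction) *)
Definition meq (L : language) (M : structure L) (C : M -> Prop) (n : nat)
  (mu nu : tpred M n -> R) : Prop :=
  forall D, definable C D -> mu D = nu D.

Definition xpart (T : Type) (n m : nat) (w : 'I_(n + m) -> T) : 'I_n -> T :=
  fun i => w (lshift m i).
Definition ypart (T : Type) (n m : nat) (w : 'I_(n + m) -> T) : 'I_m -> T :=
  fun j => w (rshift n j).

Definition pi_x (L : language) (M : structure L) (n m : nat)
  (om : tpred M (n + m) -> R) : tpred M n -> R :=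
  fun D => om (fun w => D (xpart w)).
Definition pi_y (L : language) (M : structure L) (n m : nat)
  (om : tpred M (n + m) -> R) : tpred M m -> R :=
  fun D => om (fun w => D (ypart w)).

Definition amalgam (L : language) (M : structure L) (C : M -> Prop) (n m : nat)
  (la : tpred M (n + m) -> R) : Prop :=
  keisler C la /\
  forall (P : tpred M n) (Q : tpred M m), definable C P -> definable C Q ->
    la (fun w => P (xpart w) /\ Q (ypart w)) =
      (pi_x la P * pi_y la Q)%R.

Definition in_Amal (L : language) (M : structure L) (C : M -> Prop) (n m : nat)
  (la : tpred M (n + m) -> R) (mu : tpred M n -> R)
  (om : tpred M (n + m) -> R) : Prop :=
  amalgam (fullset M) om /\ meq C om la /\ meq (fullset M) (pi_x om) mu.

Definition btri (L : language) (M : structure L) (C : M -> Prop) (n m : nat)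
  (mu : tpred M n -> R) (nu : tpred M m -> R) : Prop :=
  exists la : tpred M (n + m) -> R,
    keisler C la /\ meq C (pi_x la) mu /\
    (exists om, in_Amal C la mu om) /\
    (forall om, in_Amal C la mu om -> meq (fullset M) (pi_y om) nu).

(* q in S_m(M): an ultrafilter on the Boolean algebra of M-definable subsets of
   M^m (= a complete type over M, as a set of formulas modulo Th(M_M)) *)
Definition complete_type (L : language) (M : structure L) (m : nat)
  (q : tpred M m -> Prop) : Prop :=
  (forall D, q D -> definable (fullset M) D) /\
  q (fun _ => True) /\
  ~ q (fun _ => False) /\
  (forall D1 D2, q D1 -> q D2 -> q (fun v => D1 v /\ D2 v)) /\
  (forall D1 D2, q D1 -> definable (fullset M) D2 -> (forall v, D1 v -> D2 v) ->
     q D2) /\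
  (forall D, definable (fullset M) D -> q D \/ q (fun v => ~ D v)).

Definition in_supp (L : language) (M : structure L) (m : nat)
  (nu : tpred M m -> R) (q : tpred M m -> Prop) : Prop :=
  complete_type q /\ forall D, q D -> (0 < nu D)%R.

Definition supp_disjoint (L : language) (M : structure L) (m : nat)
  (nu1 nu2 : tpred M m -> R) : Prop :=
  ~ exists q, in_supp nu1 q /\ in_supp nu2 q.

Definition add_tuple (T : Type) (A : T -> Prop) (k : nat) (b : 'I_k -> T) : T -> Prop :=
  fun u => A u \/ exists i, b i = u.

Definition mix (T : Type) (r s : R) (nu1 nu2 : T -> R) : T -> R :=
  fun D => (r * nu1 D + s * nu2 D)%R.

From Stdlib Require Import Reals Lra.
From mathcomp Require Import ssreflect ssrfun ssrbool eqtype ssrnat fintype tuple zify.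
From mathcomp Require Import boolp classical_sets filter.

(* A separating formula: the supports being disjoint, some psi(y, b) has nu1-measure
   1 and nu2-measure 0, for otherwise the definable sets of full nu1-measure and of full
   nu2-measure generate a proper filter, and an ultrafilter extending it is a type in
   both supports.  Let omega_i in Amal(lambda_i, mu) witness mu |>_A nu_i and put
   lambda := r omega_1 + s omega_2 over Ab; lambda is itself in Amal(lambda, mu).
   Given any omega in Amal(lambda, mu), conditioning omega on psi(y) yields a measure
   that agrees with lambda_1 over A (below psi(y), lambda is just r omega_1), so it
   lies in Amal(lambda_1, mu) and its y-marginal is nu_1; symmetrically for ~psi(y)
   and nu_2.  Hence pi_y(omega) = r nu_1 + s nu_2. *)

Set Implicit Arguments.
Unset Strict Implicit.

Local Open Scope classical_set_scope.

Section Definability.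
Variables (L : language) (M : structure L).

Fixpoint rename_vars (rho : nat -> nat) (phi : formula L) : formula L :=
  match phi with
  | F_eq i j => F_eq L (rho i) (rho j)
  | F_rel r a => @F_rel L r (fun k => rho (a k))
  | F_not p => F_not (rename_vars rho p)
  | F_and p q => F_and (rename_vars rho p) (rename_vars rho q)
  | F_ex i p => F_ex (rho i) (rename_vars rho p)
  end.

Lemma sat_rename (rho : nat -> nat) : injective rho ->
  forall phi (e : nat -> M),
    sat e (rename_vars rho phi) <-> sat (fun i => e (rho i)) phi.
Proof.
move=> rho_inj; elim=> [i j|r a|p IH|p IHp q IHq|i p IH] e //=.
- by split=> np sp; apply: np; apply/IH.
- by split=> -[sp sq]; split; first [apply/IHp | apply/IHq].
- have upd u : (fun k => if rho k == rho i then u else e (rho k)) =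
               (fun j => if j == i then u else e (rho j)).
    by apply: funext => k; rewrite (inj_eq rho_inj).
  split=> -[u su]; exists u.
    by rewrite -upd; exact: (proj1 (IH _) su).
  by move: su; rewrite -upd => su; exact: (proj2 (IH _) su).
Qed.

Lemma definable_sub (C C' : M -> Prop) N (D : tpred M N) :
  C `<=` C' -> definable C D -> definable C' D.
Proof.
move=> sCC' [phi [k [p [Cp HD]]]]; exists phi, k, p; split=> // i.
exact/sCC'/Cp.
Qed.

Lemma definable_fullset (C : M -> Prop) N (D : tpred M N) :
  definable C D -> definable (fullset M) D.
Proof. exact: definable_sub. Qed.

Lemma definable_true (C : M -> Prop) N : definable C (fun _ : 'I_N -> M => True).
Proof. by exists (F_eq L 0 0), 0, (tnth [tuple]); split=> // -[]. Qed.

Lemma definable_not (C : M -> Prop) N (D : tpred M N) :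
  definable C D -> definable C (fun v => ~ D v).
Proof.
move=> [phi [k [p [Cp HD]]]]; exists (F_not phi), k, p; split=> // v e ev ep /=.
by rewrite (HD v e ev ep).
Qed.

(* The variables of [phi2] beyond its N free ones are shifted past the parameters
   of [phi1]. *)
Lemma definable_and (C : M -> Prop) N (D1 D2 : tpred M N) :
  definable C D1 -> definable C D2 -> definable C (fun v => D1 v /\ D2 v).
Proof.
move=> [phi1 [k1 [p1 [Cp1 HD1]]]] [phi2 [k2 [p2 [Cp2 HD2]]]].
pose rho j := if j < N then j else j + k1.
have rho_inj : injective rho.
  by move=> a b; rewrite /rho; case: (ltnP a N); case: (ltnP b N) => *; lia.
exists (F_and phi1 (rename_vars rho phi2)), (k1 + k2),
  (fun i => match split i with inl a => p1 a | inr b => p2 b end).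
split=> [i|v e ev ep /=].
  by case: (split i) => a; [exact: Cp1 | exact: Cp2].
have E1 : D1 v <-> sat e phi1.
  by apply: HD1 => // i; have := ep (lshift k2 i); rewrite (unsplitK (inl i)).
have E2 : D2 v <-> sat (fun j => e (rho j)) phi2.
  apply: HD2 => i; first by rewrite /rho ltn_ord.
  have := ep (rshift k1 i); rewrite (unsplitK (inr i)) /= => <-.
  by rewrite /rho ifN; [congr e; lia | lia].
by rewrite sat_rename // E1 E2.
Qed.

Lemma definable_ypart (C : M -> Prop) n m (D : tpred M m) :
  definable C D -> definable C (fun w : 'I_(n + m) -> M => D (ypart w)).
Proof.
move=> [phi [k [p [Cp HD]]]].
exists (rename_vars (addn n) phi), k, p; split=> // w e ew ep.
rewrite sat_rename; last exact: addnI.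
apply: HD => [i|i]; first exact: ew (rshift n i).
by rewrite addnA; exact: ep.
Qed.

Lemma definable_add_tuple (A : M -> Prop) N (D : tpred M N) :
  definable (fullset M) D -> exists k (b : 'I_k -> M), definable (add_tuple A b) D.
Proof.
move=> [phi [k [b [_ HD]]]]; exists k, b, phi, k, b; split=> // i.
by right; exists i.
Qed.

End Definability.

Definition cond (L : language) (M : structure L) N (ka : tpred M N -> R)
  (E : tpred M N) : tpred M N -> R :=
  fun D => (ka (fun v => D v /\ E v) / ka E)%R.

Section KeislerMeasure.
Variables (L : language) (M : structure L) (C : M -> Prop) (N : nat)
  (ka : tpred M N -> R).
Hypothesis ka_keisler : keisler C ka.

Lemma keisler_ge0 D : definable C D -> (0 <= ka D)%R.
Proof. by case: ka_keisler => _ [+ _]; apply. Qed.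

Lemma keisler_add D1 D2 : definable C D1 -> definable C D2 ->
  (forall v, ~ (D1 v /\ D2 v)) -> ka (fun v => D1 v \/ D2 v) = (ka D1 + ka D2)%R.
Proof. by case: ka_keisler => _ [_ [_ +]]; apply. Qed.

Lemma keisler_true : ka (fun _ => True) = 1%R.
Proof. by case: ka_keisler => _ [_ []]. Qed.

Lemma keisler_split E D : definable C E -> definable C D ->
  ka E = (ka (fun v => E v /\ D v) + ka (fun v => E v /\ ~ D v))%R.
Proof.
move=> hE hD; rewrite -keisler_add; last by move=> v; tauto.
- by congr ka; apply/predeqP => v; have := EM (D v); tauto.
- exact: definable_and.
- exact/definable_and/definable_not.
Qed.

Lemma keisler_not D : definable C D -> ka (fun v => ~ D v) = (1 - ka D)%R.
Proof.
move=> hD; have := keisler_split (definable_true C N) hD.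
rewrite keisler_true.
have -> : (fun v => True /\ D v) = D by apply/predeqP; tauto.
have -> : (fun v => True /\ ~ D v) = (fun v => ~ D v) by apply/predeqP; tauto.
lra.
Qed.

Lemma keisler_le D E : definable C D -> definable C E -> D `<=` E ->
  (ka D <= ka E)%R.
Proof.
move=> hD hE sDE; rewrite (keisler_split hE hD).
have -> : (fun v => E v /\ D v) = D by apply/predeqP => v; split=> [[]|/[dup]/sDE].
have := keisler_ge0 (definable_and hE (definable_not hD)); lra.
Qed.

Lemma keisler_and_null D E : definable C D -> definable C E -> ka E = 0%R ->
  ka (fun v => D v /\ E v) = 0%R.
Proof.
move=> hD hE E0; have := keisler_le (definable_and hD hE) hE (fun v => @proj2 _ _).
have := keisler_ge0 (definable_and hD hE); lra.
Qed.

Lemma keisler_and_full D E : definable C D -> definable C E -> ka E = 1%R ->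
  ka (fun v => D v /\ E v) = ka D.
Proof.
move=> hD hE E1; rewrite [RHS](keisler_split hD hE).
rewrite (keisler_and_null hD (definable_not hE)) ?Rplus_0_r //.
by rewrite keisler_not // E1 Rminus_diag.
Qed.

Lemma keisler_sub (C' : M -> Prop) : C' `<=` C -> keisler C' ka.
Proof.
move=> sC'C; have defC D : definable C' D -> definable C D := definable_sub sC'C.
have [ext _] := ka_keisler; split; last split; last split.
- by move=> D D' /defC; apply: ext.
- by move=> D /defC; apply: keisler_ge0.
- exact: keisler_true.
- by move=> D1 D2 /defC h1 /defC h2; apply: keisler_add.
Qed.

Lemma keisler_cond E : definable C E -> (0 < ka E)%R -> keisler C (cond ka E).
Proof.
move=> hE E_gt0; rewrite /cond; split; last split; last split.
- by move=> D D' _ /predeqP ->.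
- move=> D hD; apply: Rmult_le_pos; last exact/Rlt_le/Rinv_0_lt_compat.
  exact/keisler_ge0/definable_and.
- have -> : (fun v => True /\ E v) = E by apply/predeqP; tauto.
  by field; apply: Rgt_not_eq.
- move=> D1 D2 h1 h2 disj.
  have -> : (fun v => (D1 v \/ D2 v) /\ E v) =
            (fun v => (D1 v /\ E v) \/ (D2 v /\ E v)) by apply/predeqP; tauto.
  rewrite keisler_add; first by rewrite Rdiv_plus_distr.
  + exact: definable_and.
  + exact: definable_and.
  + by move=> v; have := disj v; tauto.
Qed.

End KeislerMeasure.

Lemma keisler_mix (L : language) (M : structure L) (C : M -> Prop) N
  (ka kb : tpred M N -> R) (r s : R) :
  keisler C ka -> keisler C kb -> (0 <= r)%R -> (0 <= s)%R -> (r + s = 1)%R ->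
  keisler C (mix r s ka kb).
Proof.
move=> Hka Hkb r_ge0 s_ge0 rs1; rewrite /mix; split; last split; last split.
- by move=> D D' _ /predeqP ->.
- move=> D hD; apply: Rplus_le_le_0_compat; apply: Rmult_le_pos => //.
    exact: (keisler_ge0 Hka hD).
  exact: (keisler_ge0 Hkb hD).
- by rewrite (keisler_true Hka) (keisler_true Hkb); lra.
- move=> D1 D2 h1 h2 disj.
  by rewrite (keisler_add Hka h1 h2 disj) (keisler_add Hkb h1 h2 disj); ring.
Qed.

Section Amalgams.
Variables (L : language) (M : structure L) (C : M -> Prop) (n m : nat).

Lemma amalgam_cond (om : tpred M (n + m) -> R) (psi : tpred M m) :
  amalgam C om -> definable C psi -> (0 < pi_y om psi)%R ->
  amalgam C (cond om (fun w => psi (ypart w))).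
Proof.
move=> [om_keisler om_prod] hpsi psi_gt0.
split; first exact/keisler_cond/psi_gt0/definable_ypart.
move=> P Q hP hQ; rewrite /pi_x /pi_y /cond.
have -> : om (fun w => (P (xpart w) /\ Q (ypart w)) /\ psi (ypart w)) =
          (pi_x om P * pi_y om (fun v => Q v /\ psi v))%R.
  by rewrite -om_prod; [congr om; apply/predeqP => w /=; tauto | | exact: definable_and].
rewrite om_prod // /pi_x /pi_y.
by field; apply: Rgt_not_eq.
Qed.

Lemma pi_x_cond (om : tpred M (n + m) -> R) (psi : tpred M m) :
  amalgam C om -> definable C psi -> (0 < pi_y om psi)%R ->
  meq C (pi_x (cond om (fun w => psi (ypart w)))) (pi_x om).
Proof.
move=> [_ om_prod] hpsi psi_gt0 P hP; rewrite /pi_x /cond om_prod //.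
by rewrite /pi_x /pi_y; field; apply: Rgt_not_eq.
Qed.

Lemma amalgam_mix (a b : tpred M (n + m) -> R) (r s : R) :
  amalgam C a -> amalgam C b -> meq C (pi_x a) (pi_x b) ->
  (0 <= r)%R -> (0 <= s)%R -> (r + s = 1)%R -> amalgam C (mix r s a b).
Proof.
move=> [a_keisler a_prod] [b_keisler b_prod] ab_x r_ge0 s_ge0 rs1.
split; first exact: keisler_mix.
move=> P Q hP hQ.
change (r * a (fun w => P (xpart w) /\ Q (ypart w)) +
        s * b (fun w => P (xpart w) /\ Q (ypart w)) =
        (r * pi_x a P + s * pi_x b P) * (r * pi_y a Q + s * pi_y b Q))%R.
rewrite a_prod // b_prod // (ab_x P hP).
replace r with (1 - s)%R by lra; ring.
Qed.

End Amalgams.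

Section ConditionedAmalgam.
Variables (L : language) (M : structure L) (n m : nat) (A C : M -> Prop)
  (mu : tpred M n -> R) (la_a la om_a om_b om : tpred M (n + m) -> R)
  (psi : tpred M m) (r s : R).
Hypotheses (sAC : A `<=` C) (hpsi : definable C psi)
  (om_a_Amal : in_Amal A la_a mu om_a) (om_b_keisler : keisler (fullset M) om_b)
  (om_a_psi : pi_y om_a psi = 1%R) (om_b_psi : pi_y om_b psi = 0%R)
  (la_mix : meq C la (mix r s om_a om_b)) (om_Amal : in_Amal C la mu om).

Let Psi : tpred M (n + m) := fun w => psi (ypart w).

Let hPsi : definable C Psi := definable_ypart n hpsi.

Lemma om_Psi : om Psi = r.
Proof.
have [_ [om_la _]] := om_Amal.
rewrite om_la // la_mix // /mix.
change (r * pi_y om_a psi + s * pi_y om_b psi = r)%R.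
by rewrite om_a_psi om_b_psi; ring.
Qed.

Lemma cond_in_Amal : (0 < r)%R -> in_Amal A la_a mu (cond om Psi).
Proof.
move=> r_gt0; have [om_amalgam [om_la om_x]] := om_Amal.
have [[om_a_keisler _] [om_a_la_a _]] := om_a_Amal.
have hpsi_full := definable_fullset hpsi.
have hPsi_full := definable_fullset hPsi.
have psi_gt0 : (0 < pi_y om psi)%R by rewrite /pi_y om_Psi.
split; last split.
- exact: (amalgam_cond om_amalgam hpsi_full psi_gt0).
- move=> chi hchi; have hchi_full := definable_fullset hchi.
  rewrite /cond om_Psi om_la; last exact/definable_and/hPsi/(definable_sub sAC).
  rewrite la_mix; last exact/definable_and/hPsi/(definable_sub sAC).
  rewrite /mix (keisler_and_full om_a_keisler) ?(keisler_and_null om_b_keisler) //.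
  by rewrite -om_a_la_a //; field; apply: Rgt_not_eq.
- by move=> P hP; rewrite (pi_x_cond om_amalgam hpsi_full psi_gt0) //; apply: om_x.
Qed.

Lemma in_Amal_mix_and (nu_a : tpred M m -> R) :
  (forall om', in_Amal A la_a mu om' -> meq (fullset M) (pi_y om') nu_a) ->
  (0 <= r)%R -> forall th, definable (fullset M) th ->
  om (fun w => th (ypart w) /\ psi (ypart w)) = (r * nu_a th)%R.
Proof.
move=> nu_a_unique r_ge0 th hth.
have [[om_keisler _] _] := om_Amal.
have hth_y := definable_ypart n hth.
have hPsi_full := definable_fullset hPsi.
case: (Req_dec r 0) => [r0 | r_neq0].
  by rewrite (keisler_and_null om_keisler) // ?om_Psi r0 ?Rmult_0_l.
have r_gt0 : (0 < r)%R by lra.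
have := nu_a_unique _ (cond_in_Amal r_gt0) th hth.
rewrite /pi_y /cond om_Psi /Psi => <-.
by field.
Qed.

End ConditionedAmalgam.

Lemma pi_y_in_Amal_mix (L : language) (M : structure L) (n m : nat)
  (A C : M -> Prop) (mu : tpred M n -> R) (la1 la2 om1 om2 om : tpred M (n + m) -> R)
  (nu1 nu2 : tpred M m -> R) (psi : tpred M m) (r s : R) :
  A `<=` C -> definable C psi ->
  in_Amal A la1 mu om1 -> in_Amal A la2 mu om2 ->
  pi_y om1 psi = 1%R -> pi_y om2 psi = 0%R ->
  (forall om', in_Amal A la1 mu om' -> meq (fullset M) (pi_y om') nu1) ->
  (forall om', in_Amal A la2 mu om' -> meq (fullset M) (pi_y om') nu2) ->
  (0 <= r)%R -> (0 <= s)%R ->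
  in_Amal C (mix r s om1 om2) mu om ->
  meq (fullset M) (pi_y om) (mix r s nu1 nu2).
Proof.
move=> sAC hpsi om1_Amal om2_Amal om1_psi om2_psi nu1_unique nu2_unique
  r_ge0 s_ge0 om_Amal th hth.
have [[om_keisler _] _] := om_Amal.
have [[[om1_keisler _] _] [[om2_keisler _] _]] := (om1_Amal, om2_Amal).
have hPsi := definable_ypart n (definable_fullset hpsi).
have om1_npsi : pi_y om1 (fun v => ~ psi v) = 0%R.
  by rewrite /pi_y (keisler_not om1_keisler hPsi) -/(pi_y om1 psi) om1_psi Rminus_diag.
have om2_npsi : pi_y om2 (fun v => ~ psi v) = 1%R.
  by rewrite /pi_y (keisler_not om2_keisler hPsi) -/(pi_y om2 psi) om2_psi Rminus_0_r.
have swap : meq C (mix r s om1 om2) (mix s r om2 om1).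
  by move=> D _; rewrite /mix Rplus_comm.
rewrite /pi_y /mix (keisler_split om_keisler (definable_ypart n hth) hPsi).
rewrite (in_Amal_mix_and sAC hpsi om1_Amal om2_keisler om1_psi om2_psi
  (fun D _ => erefl) om_Amal nu1_unique r_ge0 hth).
by rewrite (in_Amal_mix_and sAC (definable_not hpsi) om2_Amal om1_keisler om2_npsi
  om1_npsi swap om_Amal nu2_unique s_ge0 hth).
Qed.

Lemma btri_mix (L : language) (M : structure L) (n m : nat) (A C : M -> Prop)
  (mu : tpred M n -> R) (nu1 nu2 : tpred M m -> R) (psi : tpred M m) (r s : R) :
  A `<=` C -> definable C psi -> nu1 psi = 1%R -> nu2 psi = 0%R ->
  btri A mu nu1 -> btri A mu nu2 ->
  (0 <= r)%R -> (0 <= s)%R -> (r + s = 1)%R ->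
  btri C mu (mix r s nu1 nu2).
Proof.
move=> sAC hpsi nu1_psi nu2_psi [la1 [_ [_ [[om1 om1_Amal] nu1_unique]]]]
  [la2 [_ [_ [[om2 om2_Amal] nu2_unique]]]] r_ge0 s_ge0 rs1.
have [om1_amalgam [_ om1_x]] := om1_Amal.
have [om2_amalgam [_ om2_x]] := om2_Amal.
have hpsi_full := definable_fullset hpsi.
have om1_psi : pi_y om1 psi = 1%R by rewrite (nu1_unique _ om1_Amal).
have om2_psi : pi_y om2 psi = 0%R by rewrite (nu2_unique _ om2_Amal).
have la_amalgam : amalgam (fullset M) (mix r s om1 om2).
  by apply: amalgam_mix => // P hP; rewrite om1_x ?om2_x.
have la_x : meq (fullset M) (pi_x (mix r s om1 om2)) mu.
  move=> P hP; change (r * pi_x om1 P + s * pi_x om2 P = mu P)%R.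
  by rewrite om1_x ?om2_x // -Rmult_plus_distr_r rs1 Rmult_1_l.
exists (mix r s om1 om2); split; last split; last split.
- exact: (keisler_sub (proj1 la_amalgam) (fun _ _ => I)).
- by move=> P /definable_fullset; apply: la_x.
- by exists (mix r s om1 om2).
- by move=> om; apply: (pi_y_in_Amal_mix sAC hpsi om1_Amal om2_Amal om1_psi om2_psi).
Qed.

Section Separation.
Variables (L : language) (M : structure L) (m : nat).

Lemma ultrafilter_complete_type (G : set_system ('I_m -> M)) : UltraFilter G ->
  complete_type (fun D => definable (fullset M) D /\ G D).
Proof.
move=> G_ultra; have G_proper : ProperFilter G := ultra_proper.
split; first by move=> D [].
split; first by split; [exact: definable_true | exact: filterT].
split; first by move=> [_]; exact: filter_not_empty.
split.
  by move=> D1 D2 [h1 g1] [h2 g2]; split; [exact: definable_and | exact: filterI].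
split; first by move=> D1 D2 [_ g1] h2 sD12; split; [|exact: filterS g1].
move=> D hD; case: (in_ultra_setVsetC D G_ultra) => g; [by left | right].
by split; first exact: definable_not.
Qed.

Lemma ultrafilter_in_supp (G : set_system ('I_m -> M)) (nu : tpred M m -> R) :
  UltraFilter G -> keisler (fullset M) nu ->
  (forall D, definable (fullset M) D -> nu D = 1%R -> G D) ->
  in_supp nu (fun D => definable (fullset M) D /\ G D).
Proof.
move=> G_ultra nu_keisler nu_full_in_G.
split; first exact: ultrafilter_complete_type.
move=> D [hD gD]; apply: Rnot_le_lt => nuD_le0.
have nuD0 : nu D = 0%R by have := keisler_ge0 nu_keisler hD; lra.
have gnD : G (fun v => ~ D v).
  apply: nu_full_in_G; first exact: definable_not.
  by rewrite (keisler_not nu_keisler hD) nuD0 Rminus_0_r.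
have G_proper : ProperFilter G := ultra_proper.
apply: (filter_not_empty G); rewrite -(setICr D); exact: filterI.
Qed.

Lemma separating_definable (nu1 nu2 : tpred M m -> R) :
  keisler (fullset M) nu1 -> keisler (fullset M) nu2 -> supp_disjoint nu1 nu2 ->
  exists psi, definable (fullset M) psi /\ nu1 psi = 1%R /\ nu2 psi = 0%R.
Proof.
move=> nu1_keisler nu2_keisler disj; apply: contrapT => no_separator.
pose full_pairs := [set AB : tpred M m * tpred M m |
  definable (fullset M) AB.1 /\ definable (fullset M) AB.2 /\
  nu1 AB.1 = 1%R /\ nu2 AB.2 = 1%R].
pose F := filter_from full_pairs (fun AB => AB.1 `&` AB.2).
have F_proper : ProperFilter F.
  apply: filter_from_proper.
    apply: filter_from_filter.
      exists (setT, setT); rewrite /full_pairs /=.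
      do 2 (split; first exact: definable_true).
      by split; [exact: (keisler_true nu1_keisler) | exact: (keisler_true nu2_keisler)].
    move=> [A1 A2] [B1 B2] [hA1 [hA2 [eA1 eA2]]] [hB1 [hB2 [eB1 eB2]]].
    exists (A1 `&` B1, A2 `&` B2); last by move=> v /= [[? ?] [? ?]].
    split; first exact: definable_and.
    split; first exact: definable_and.
    split; first exact: (etrans (keisler_and_full nu1_keisler hA1 hB1 eB1) eA1).
    exact: (etrans (keisler_and_full nu2_keisler hA2 hB2 eB2) eA2).
  move=> [A1 A2]; rewrite /full_pairs /= => -[hA1 [hA2 [eA1 eA2]]].
  apply: contrapT => A12_empty.
  apply: no_separator; exists A1; do 2 split => //.
  have A1_sub : A1 `<=` (fun v => ~ A2 v).
    by move=> v A1v A2v; apply: A12_empty; exists v.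
  have := keisler_le nu2_keisler hA1 (definable_not hA2) A1_sub.
  rewrite (keisler_not nu2_keisler hA2) eA2; have := keisler_ge0 nu2_keisler hA1; lra.
have [G [G_ultra sFG]] := ultraFilterLemma F_proper.
apply: disj; exists (fun D => definable (fullset M) D /\ G D).
split; apply: ultrafilter_in_supp => // D hD eD; apply: sFG.
- exists (D, setT); last by move=> v [].
  rewrite /full_pairs /=.
  split=> //; split; first exact: definable_true.
  by split=> //; exact: (keisler_true nu2_keisler).
- exists (setT, D); last by move=> v [].
  rewrite /full_pairs /=.
  split; first exact: definable_true.
  by do 2 split=> //; exact: (keisler_true nu1_keisler).
Qed.

End Separation.

Theorem proposition5p9 (L : language) (M : structure L) (K : Type)
  (A : M -> Prop) (n m : nat)
  (mu : tpred M n -> R) (nu1 nu2 : tpred M m -> R) :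
  monster M K ->
  small K A ->
  keisler (fullset M) mu ->
  keisler (fullset M) nu1 ->
  keisler (fullset M) nu2 ->
  supp_disjoint nu1 nu2 ->
  btri A mu nu1 ->
  btri A mu nu2 ->
  exists (k : nat) (b : 'I_k -> M),
    forall r s : R, (0 <= r)%R -> (r <= 1)%R -> (0 <= s)%R -> (s <= 1)%R ->
      (r + s = 1)%R ->
      btri (add_tuple A b) mu (mix r s nu1 nu2).
Proof.
move=> _ _ _ nu1_keisler nu2_keisler disj mu_nu1 mu_nu2.
have [psi [hpsi [nu1_psi nu2_psi]]] :=
  separating_definable nu1_keisler nu2_keisler disj.
have [k [b hpsi_b]] := definable_add_tuple A hpsi.
exists k, b => r s r_ge0 _ s_ge0 _ rs1.
exact: btri_mix (fun u Au => or_introl Au) hpsi_b nu1_psi nu2_psi mu_nu1 mu_nu2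
  r_ge0 s_ge0 rs1.
Qed.
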